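(* Consider a one-site PTM cascade with $n=1$ layer (species $E,S^0,S^1,F,Y^0,Y^1$, constants $\delta,\gamma,\lambda$) and positive total amounts $\overline{E},\overline{F},\overline{S}$. Let $\Delta=\gamma\overline{F}-\delta\overline{E}$, $q_1(s)=1+\delta s$, $q_2(s)=\overline{E}-\Delta s$, $p(s)=\lambda\overline{F}q_1(s)+q_1(s)q_2(s)+(\gamma+\delta)\overline{F}q_2(s)$, and $\varphi(s)=\frac{s\,p(s)}{q_1(s)q_2(s)}$. Let $\Gamma=[0,\infty)$ if $\Delta\le0$ and $\Gamma=[0,\overline{E}/\Delta)$ if $\Delta>0$. Then: (i) the system has a unique BMSS; (ii) the restriction of $\varphi$ to $\Gamma$ is a continuous increasing bijection $\Gamma\to[0,\infty)$, and its inverse $\psi:[0,\infty)\to\Gamma$ is continuous, increasing, satisfies $\psi(0)=0$, and for every $\overline{S}>0$ the BMSS value of $S^1$ equals $\psi(\overline{S})$.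
   Context: For $n=1$ the one-site PTM cascade has species $E,S^0,S^1,F,Y^0,Y^1$ with reactions $E+S^0\rightleftharpoons Y^0\to E+S^1$ (rate constants $a^0,b^0,c^0$) and $F+S^1\rightleftharpoons Y^1\to F+S^0$ (rate constants $a^1,b^1,c^1$), all positive, mass-action kinetics. Put $\delta=a^1/(b^1+c^1)$, $\gamma=(c^1/c^0)\delta$, $\lambda=\frac{b^0+c^0}{a^0}\gamma$. A steady state for total amounts $\overline{E},\overline{F},\overline{S}$ is a real solution of $Y^0=\gamma FS^1$, $Y^1=\delta FS^1$, $\lambda FS^1=S^0E$, $\overline{F}=F+Y^1$, $\overline{E}=E+Y^0$, $\overline{S}=S^0+S^1+Y^0+Y^1$. A BMSS (biologically meaningful steady state) is a steady state with positive total amounts and all concentrations nonnegative. A function is called increasing if it is strictly increasing. *)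

From Stdlib Require Export Reals.
Open Scope R_scope.

Definition delta (a0 b0 c0 a1 b1 c1 : R) : R := a1 / (b1 + c1).
Definition gamma (a0 b0 c0 a1 b1 c1 : R) : R := (c1 / c0) * (delta a0 b0 c0 a1 b1 c1).
Definition lambda (a0 b0 c0 a1 b1 c1 : R) : R := ((b0 + c0) / a0) * (gamma a0 b0 c0 a1 b1 c1).

Definition steady_state (a0 b0 c0 a1 b1 c1 : R) (Eb Fb Sb E S0 S1 F Y0 Y1 : R) : Prop :=
  Y0 = (gamma a0 b0 c0 a1 b1 c1) * F * S1 /\
  Y1 = (delta a0 b0 c0 a1 b1 c1) * F * S1 /\
  (lambda a0 b0 c0 a1 b1 c1) * F * S1 = S0 * E /\
  Fb = F + Y1 /\
  Eb = E + Y0 /\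
  Sb = S0 + S1 + Y0 + Y1.

Definition BMSS (a0 b0 c0 a1 b1 c1 : R) (Eb Fb Sb E S0 S1 F Y0 Y1 : R) : Prop :=
  0 < Eb /\ 0 < Fb /\ 0 < Sb /\
  (steady_state a0 b0 c0 a1 b1 c1) Eb Fb Sb E S0 S1 F Y0 Y1 /\
  0 <= E /\ 0 <= S0 /\ 0 <= S1 /\ 0 <= F /\ 0 <= Y0 /\ 0 <= Y1.

Definition Delta (a0 b0 c0 a1 b1 c1 : R) (Eb Fb : R) : R := (gamma a0 b0 c0 a1 b1 c1) * Fb - (delta a0 b0 c0 a1 b1 c1) * Eb.
Definition q1 (a0 b0 c0 a1 b1 c1 : R) (s : R) : R := 1 + (delta a0 b0 c0 a1 b1 c1) * s.
Definition q2 (a0 b0 c0 a1 b1 c1 : R) (Eb Fb s : R) : R := Eb - (Delta a0 b0 c0 a1 b1 c1) Eb Fb * s.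
Definition p (a0 b0 c0 a1 b1 c1 : R) (Eb Fb s : R) : R :=
  (lambda a0 b0 c0 a1 b1 c1) * Fb * (q1 a0 b0 c0 a1 b1 c1) s + (q1 a0 b0 c0 a1 b1 c1) s * (q2 a0 b0 c0 a1 b1 c1) Eb Fb s + ((gamma a0 b0 c0 a1 b1 c1) + (delta a0 b0 c0 a1 b1 c1)) * Fb * (q2 a0 b0 c0 a1 b1 c1) Eb Fb s.
Definition phi (a0 b0 c0 a1 b1 c1 : R) (Eb Fb s : R) : R := s * (p a0 b0 c0 a1 b1 c1) Eb Fb s / ((q1 a0 b0 c0 a1 b1 c1) s * (q2 a0 b0 c0 a1 b1 c1) Eb Fb s).

Definition Gamma (a0 b0 c0 a1 b1 c1 : R) (Eb Fb s : R) : Prop :=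
  0 <= s /\ (0 < (Delta a0 b0 c0 a1 b1 c1) Eb Fb -> s < Eb / (Delta a0 b0 c0 a1 b1 c1) Eb Fb).


Definition continuous_on (D : R -> Prop) (f : R -> R) : Prop :=
  forall x, D x -> limit1_in f D (f x) x.

Definition nonneg_set (x : R) : Prop := 0 <= x.

(* After eliminating F, E, Y0, Y1 and S0, a steady state is determined by
   s = S1 through F = Fb/q1(s), E = q2(s)/q1(s), and the conservation law for
   S turns into Sb = phi(s).  Nonnegativity forces q2(s) > 0, i.e. s in Gamma.
   On Gamma, phi(s) = s + lambda Fb s/q2(s) + (gamma+delta) Fb s/q1(s) is a sum
   of increasing terms which is unbounded (through the first term when
   Delta <= 0, the second one when Delta > 0), so by the intermediate value
   theorem it is an increasing bijection Gamma -> [0, oo).  Its inverse psi is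
   then continuous because Gamma is an interval, and S1 = psi(Sb). *)

From Stdlib Require Import Psatz ClassicalEpsilon.
Open Scope R_scope.

Definition strictly_increasing_on (D : R -> Prop) (f : R -> R) : Prop :=
  forall x y, D x -> D y -> x < y -> f x < f y.

Lemma strictly_increasing_on_lt_rev (D : R -> Prop) (f : R -> R) x y :
  strictly_increasing_on D f -> D x -> D y -> f x < f y -> x < y.
Proof.
  intros f_incr Dx Dy fxy.
  destruct (Rtotal_order x y) as [lt | [-> | gt]]; [exact lt | lra |].
  specialize (f_incr y x Dy Dx gt). lra.
Qed.

Lemma strictly_increasing_on_inj (D : R -> Prop) (f : R -> R) x y :
  strictly_increasing_on D f -> D x -> D y -> f x = f y -> x = y.
Proof.
  intros f_incr Dx Dy fxy.
  destruct (Rtotal_order x y) as [lt | [eq | gt]]; [| exact eq |].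
  - specialize (f_incr x y Dx Dy lt). lra.
  - specialize (f_incr y x Dy Dx gt). lra.
Qed.

Lemma Rdiv_affine_le a b x y :
  0 < a -> 0 < a + b * x -> 0 < a + b * y -> x <= y ->
  x / (a + b * x) <= y / (a + b * y).
Proof.
  intros ha hx hy xy.
  apply Rmult_le_reg_r with ((a + b * x) * (a + b * y)); [nra |].
  replace (x / (a + b * x) * ((a + b * x) * (a + b * y))) with (x * (a + b * y))
    by (field; lra).
  replace (y / (a + b * y) * ((a + b * x) * (a + b * y))) with (y * (a + b * x))
    by (field; lra).
  nra.
Qed.

Lemma continuity_pt_limit1_in (D : R -> Prop) (f : R -> R) x :
  continuity_pt f x -> limit1_in f D (f x) x.
Proof.
  intros f_cont eps heps.
  destruct (f_cont eps heps) as [alp [halp close]].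
  exists alp; split; [exact halp |].
  intros y [_ hy]. destruct (Req_dec y x) as [-> | neq].
  - simpl; unfold R_dist. rewrite Rminus_diag, Rabs_R0. exact heps.
  - apply close. split; [split; [exact I | congruence] | exact hy].
Qed.

Lemma continuity_pt_pos_right (f : R -> R) x eps :
  continuity_pt f x -> 0 < f x -> 0 < eps ->
  exists e, 0 < e < eps /\ 0 < f (x + e).
Proof.
  intros f_cont fx heps.
  destruct (f_cont (f x) fx) as [alp [halp close]].
  pose proof (Rmin_l eps alp); pose proof (Rmin_r eps alp).
  assert (hmin : 0 < Rmin eps alp) by (apply Rmin_glb_lt; lra).
  exists (Rmin eps alp / 2); split; [lra |].
  assert (near : R_dist (f (x + Rmin eps alp / 2)) (f x) < f x).
  { apply close. split.
    - split; [exact I | lra].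
    - simpl; unfold R_dist. rewrite Rabs_right; lra. }
  unfold R_dist in near. apply Rabs_def2 in near. lra.
Qed.

Section MonotoneInverse.

Variables (G : R -> Prop) (f h : R -> R).
Hypothesis f_incr : strictly_increasing_on G f.
Hypothesis h_section : forall y, 0 <= y -> G (h y) /\ f (h y) = y.
Hypothesis G_nonneg : forall x, G x -> 0 <= x.
Hypothesis G_down : forall x y, G y -> 0 <= x <= y -> G x.
Hypothesis G_right : forall x eps, G x -> 0 < eps -> exists e, 0 < e < eps /\ G (x + e).

Lemma inverse_increasing y z : 0 <= y -> 0 <= z -> y < z -> h y < h z.
Proof.
  intros hy hz yz. destruct (h_section y hy) as [Gy fy]. destruct (h_section z hz) as [Gz fz].
  apply (strictly_increasing_on_lt_rev G f); auto. lra.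
Qed.

Lemma inverse_upper y0 eps : 0 <= y0 -> 0 < eps ->
  exists d, 0 < d /\ forall y, 0 <= y -> Rabs (y - y0) < d -> h y < h y0 + eps.
Proof.
  intros hy0 heps. destruct (h_section y0 hy0) as [G0 f0].
  destruct (G_right (h y0) eps G0 heps) as [e [he Ge]].
  assert (above : f (h y0) < f (h y0 + e)) by (apply f_incr; auto; lra).
  exists (f (h y0 + e) - y0); split; [lra |].
  intros y hy close. apply Rabs_def2 in close. destruct (h_section y hy) as [Gy fy].
  assert (h y < h y0 + e) by (apply (strictly_increasing_on_lt_rev G f); auto; lra).
  lra.
Qed.

Lemma inverse_lower y0 eps : 0 <= y0 -> 0 < eps ->
  exists d, 0 < d /\ forall y, 0 <= y -> Rabs (y - y0) < d -> h y0 - eps < h y.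
Proof.
  intros hy0 heps. destruct (h_section y0 hy0) as [G0 f0].
  destruct (Rlt_or_le (h y0 - eps) 0) as [neg | nonneg].
  - exists 1; split; [lra |]. intros y hy _.
    pose proof (G_nonneg _ (proj1 (h_section y hy))). lra.
  - assert (Ga : G (h y0 - eps)) by (apply G_down with (h y0); auto; lra).
    assert (below : f (h y0 - eps) < f (h y0)) by (apply f_incr; auto; lra).
    exists (y0 - f (h y0 - eps)); split; [lra |].
    intros y hy close. apply Rabs_def2 in close. destruct (h_section y hy) as [Gy fy].
    apply (strictly_increasing_on_lt_rev G f); auto; lra.
Qed.

Lemma continuous_on_inverse : continuous_on nonneg_set h.
Proof.
  intros y0 hy0 eps heps. unfold nonneg_set in hy0.
  destruct (inverse_upper y0 eps hy0 heps) as [d1 [hd1 up]].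
  destruct (inverse_lower y0 eps hy0 heps) as [d2 [hd2 lo]].
  exists (Rmin d1 d2); split; [apply Rmin_glb_lt; auto |].
  intros y [hy close]. simpl in *; unfold R_dist in *.
  pose proof (Rmin_l d1 d2); pose proof (Rmin_r d1 d2).
  specialize (up y hy ltac:(lra)); specialize (lo y hy ltac:(lra)).
  apply Rabs_def1; lra.
Qed.

End MonotoneInverse.

Section Cascade.

Variables a0 b0 c0 a1 b1 c1 : R.
Hypotheses (ha0 : 0 < a0) (hb0 : 0 < b0) (hc0 : 0 < c0).
Hypotheses (ha1 : 0 < a1) (hb1 : 0 < b1) (hc1 : 0 < c1).
Variables Eb Fb : R.
Hypotheses (hEb : 0 < Eb) (hFb : 0 < Fb).

Local Notation δ := (delta a0 b0 c0 a1 b1 c1).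
Local Notation γ := (gamma a0 b0 c0 a1 b1 c1).
Local Notation λ := (lambda a0 b0 c0 a1 b1 c1).
Local Notation Δ := (Delta a0 b0 c0 a1 b1 c1 Eb Fb).
Local Notation q₁ := (q1 a0 b0 c0 a1 b1 c1).
Local Notation q₂ := (q2 a0 b0 c0 a1 b1 c1 Eb Fb).
Local Notation φ := (phi a0 b0 c0 a1 b1 c1 Eb Fb).
Local Notation Γ := (Gamma a0 b0 c0 a1 b1 c1 Eb Fb).
Local Notation bmss := (BMSS a0 b0 c0 a1 b1 c1 Eb Fb).

Lemma delta_pos : 0 < δ.
Proof. apply Rdiv_lt_0_compat; lra. Qed.

Lemma gamma_pos : 0 < γ.
Proof. apply Rmult_lt_0_compat; [apply Rdiv_lt_0_compat; lra | exact delta_pos]. Qed.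

Lemma lambda_pos : 0 < λ.
Proof. apply Rmult_lt_0_compat; [apply Rdiv_lt_0_compat; lra | exact gamma_pos]. Qed.

Lemma q1_pos s : 0 <= s -> 0 < q₁ s.
Proof. pose proof delta_pos. unfold q1. nra. Qed.

Lemma Gamma_iff s : Γ s <-> 0 <= s /\ 0 < q₂ s.
Proof.
  unfold Gamma, q2. split; intros [hs bound]; split; auto.
  - destruct (Rlt_or_le 0 Δ) as [hD | hD]; [| nra].
    specialize (bound hD).
    apply (Rmult_lt_compat_r Δ) in bound; [| exact hD].
    unfold Rdiv in bound. rewrite Rmult_assoc, Rinv_l in bound; lra.
  - intro hD. apply Rmult_lt_reg_r with Δ; [exact hD |].
    unfold Rdiv. rewrite Rmult_assoc, Rinv_l; lra.
Qed.

Lemma Gamma_0 : Γ 0.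
Proof. apply Gamma_iff. unfold q2. split; lra. Qed.

Lemma Gamma_nonneg s : Γ s -> 0 <= s.
Proof. now intros [hs _]. Qed.

Lemma Gamma_down x y : Γ y -> 0 <= x <= y -> Γ x.
Proof.
  rewrite !Gamma_iff. unfold q2. intros [_ hy] hxy. split; [lra |].
  destruct (Rlt_or_le 0 Δ); nra.
Qed.

Lemma Gamma_right x eps : Γ x -> 0 < eps -> exists e, 0 < e < eps /\ Γ (x + e).
Proof.
  rewrite Gamma_iff. intros [hx hq] heps.
  assert (q2_cont : continuity_pt q₂ x) by (unfold q2; reg).
  destruct (continuity_pt_pos_right q₂ x eps q2_cont hq heps) as [e [he hqe]].
  exists e; split; [exact he |]. apply Gamma_iff; split; [lra | exact hqe].
Qed.

Lemma phi_split s : q₁ s <> 0 -> q₂ s <> 0 ->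
  φ s = s + λ * Fb * (s / q₂ s) + (γ + δ) * Fb * (s / q₁ s).
Proof. intros. unfold phi, p. field. auto. Qed.

Lemma phi_0 : φ 0 = 0.
Proof. unfold phi. rewrite Rmult_0_l. apply Rdiv_0_l. Qed.

Lemma phi_increasing : strictly_increasing_on Γ φ.
Proof.
  intros x y Gx Gy xy. pose proof delta_pos; pose proof gamma_pos; pose proof lambda_pos.
  apply Gamma_iff in Gx as [hx q2x]. apply Gamma_iff in Gy as [hy q2y].
  pose proof (q1_pos x hx); pose proof (q1_pos y hy).
  rewrite !phi_split by lra.
  assert (s_q2 : x / q₂ x <= y / q₂ y).
  { replace (q₂ x) with (Eb + - Δ * x) by (unfold q2; ring).
    replace (q₂ y) with (Eb + - Δ * y) by (unfold q2; ring).
    apply Rdiv_affine_le; unfold q2 in *; lra. }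
  assert (s_q1 : x / q₁ x <= y / q₁ y) by (apply Rdiv_affine_le; unfold q1 in *; lra).
  apply Rmult_le_compat_l with (r := λ * Fb) in s_q2; [| nra].
  apply Rmult_le_compat_l with (r := (γ + δ) * Fb) in s_q1; [| nra].
  lra.
Qed.

Lemma phi_nonneg x : Γ x -> 0 <= φ x.
Proof.
  intros Gx. rewrite <- phi_0.
  destruct (Rle_lt_or_eq_dec 0 x (Gamma_nonneg x Gx)) as [pos | <-]; [| lra].
  left. exact (phi_increasing 0 x Gamma_0 Gx pos).
Qed.

Lemma phi_continuous : continuous_on Γ φ.
Proof.
  intros x Gx. apply continuity_pt_limit1_in.
  apply Gamma_iff in Gx as [hx q2x]. pose proof (q1_pos x hx).
  unfold phi, p, q1, q2 in *. reg. nra.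
Qed.

(* When Delta <= 0 the term s alone is unbounded; otherwise s/q2(s) blows up
   at Eb/Delta, and b solves lambda Fb b/q2(b) = y. *)
Lemma phi_unbounded y : 0 < y -> exists b, Γ b /\ 0 < b /\ y < φ b.
Proof.
  intros hy. pose proof delta_pos; pose proof gamma_pos; pose proof lambda_pos.
  assert (phi_ge : forall b, 0 <= b -> 0 < q₂ b ->
            b + λ * Fb * (b / q₂ b) <= φ b).
  { intros b hb q2b. pose proof (q1_pos b hb). rewrite phi_split by lra.
    assert (0 <= b / q₁ b) by (unfold Rdiv; apply Rle_mult_inv_pos; lra).
    assert (0 <= (γ + δ) * Fb * (b / q₁ b)) by (apply Rmult_le_pos; nra).
    lra. }
  destruct (Rlt_or_le 0 Δ) as [hD | hD].
  - set (b := y * Eb / (λ * Fb + y * Δ)).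
    assert (hden : 0 < λ * Fb + y * Δ) by nra.
    assert (hb : 0 < b) by (apply Rdiv_lt_0_compat; nra).
    assert (q2b : q₂ b = Eb * (λ * Fb) / (λ * Fb + y * Δ))
      by (unfold b, q2; field; lra).
    assert (q2b_pos : 0 < q₂ b).
    { rewrite q2b. apply Rdiv_lt_0_compat; [apply Rmult_lt_0_compat; nra | exact hden]. }
    assert (hit : λ * Fb * (b / q₂ b) = y) by (rewrite q2b; unfold b; field; nra).
    exists b. split; [apply Gamma_iff; lra |]. split; [exact hb |].
    pose proof (phi_ge b ltac:(lra) q2b_pos). lra.
  - assert (q2b_pos : 0 < q₂ (y + 1)) by (unfold q2; nra).
    exists (y + 1). split; [apply Gamma_iff; lra |]. split; [lra |].
    pose proof (phi_ge (y + 1) ltac:(lra) q2b_pos).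
    assert (0 <= (y + 1) / q₂ (y + 1)) by (unfold Rdiv; apply Rle_mult_inv_pos; lra).
    assert (0 <= λ * Fb * ((y + 1) / q₂ (y + 1))) by (apply Rmult_le_pos; nra).
    lra.
Qed.

(* The intermediate value theorem is applied to the numerator
   s p(s) - y q1(s) q2(s), which is a polynomial and hence continuous on R. *)
Lemma phi_surjective y : 0 <= y -> exists x, Γ x /\ φ x = y.
Proof.
  intros hy. destruct (Req_dec y 0) as [-> | hy0].
  { exists 0. split; [exact Gamma_0 | exact phi_0]. }
  destruct (phi_unbounded y ltac:(lra)) as [b [Gb [hb yb]]].
  pose (g s := s * p a0 b0 c0 a1 b1 c1 Eb Fb s - y * (q₁ s * q₂ s)).
  assert (g_cont : continuity g) by (unfold g, p, q1, q2; reg).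
  assert (num : forall s, Γ s -> g s = (φ s - y) * (q₁ s * q₂ s)).
  { intros s Gs. apply Gamma_iff in Gs as [hs q2s]. pose proof (q1_pos s hs).
    unfold g, phi. field. lra. }
  assert (g0 : g 0 < 0).
  { rewrite num, phi_0 by exact Gamma_0. unfold q1, q2. nra. }
  assert (gb : 0 < g b).
  { rewrite num by exact Gb. apply Gamma_iff in Gb as [_ q2b].
    pose proof (q1_pos b ltac:(lra)).
    apply Rmult_lt_0_compat; [lra | apply Rmult_lt_0_compat; lra]. }
  destruct (IVT g 0 b g_cont hb g0 gb) as [z [hz gz]].
  assert (Gz : Γ z) by (apply Gamma_down with b; auto).
  exists z; split; [exact Gz |].
  rewrite num in gz by exact Gz. apply Gamma_iff in Gz as [_ q2z].
  pose proof (q1_pos z ltac:(lra)).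
  apply Rmult_integral in gz as [gz | gz]; [lra |].
  apply Rmult_integral in gz; lra.
Qed.

Definition F_of (s : R) : R := Fb / q₁ s.
Definition E_of (s : R) : R := q₂ s / q₁ s.
Definition Y0_of (s : R) : R := γ * F_of s * s.
Definition Y1_of (s : R) : R := δ * F_of s * s.
Definition S0_of (s : R) : R := λ * F_of s * s / E_of s.

Lemma BMSS_of_Gamma s : Γ s -> 0 < φ s ->
  bmss (φ s) (E_of s) (S0_of s) s (F_of s) (Y0_of s) (Y1_of s).
Proof.
  intros Gs hphi. pose proof delta_pos; pose proof gamma_pos; pose proof lambda_pos.
  apply Gamma_iff in Gs as [hs q2s]. pose proof (q1_pos s hs).
  assert (hF : 0 < F_of s) by (apply Rdiv_lt_0_compat; lra).
  assert (hE : 0 < E_of s) by (apply Rdiv_lt_0_compat; lra).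
  unfold BMSS, steady_state, Y0_of, Y1_of, S0_of.
  repeat split; try lra.
  - field; lra.
  - unfold F_of, q1 in *. field; lra.
  - unfold E_of, F_of, q1, q2, Delta in *. field; lra.
  - rewrite phi_split by lra. unfold E_of, F_of. field; lra.
  - unfold Rdiv; apply Rle_mult_inv_pos; [apply Rmult_le_pos; nra | exact hE].
  - apply Rmult_le_pos; nra.
  - apply Rmult_le_pos; nra.
Qed.

Lemma BMSS_param Sb E S0 S1 F Y0 Y1 :
  bmss Sb E S0 S1 F Y0 Y1 ->
  Γ S1 /\ φ S1 = Sb /\ E = E_of S1 /\ S0 = S0_of S1 /\ F = F_of S1 /\
  Y0 = Y0_of S1 /\ Y1 = Y1_of S1.
Proof.
  intros (_ & _ & _ & (eY0 & eY1 & eS0 & eFb & eEb & eSb) & pE & pS0 & pS1 & pF & _ & _).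
  pose proof delta_pos; pose proof gamma_pos; pose proof lambda_pos.
  pose proof (q1_pos S1 pS1).
  assert (hF : F * q₁ S1 = Fb) by (unfold q1; subst; ring).
  assert (hE : E * q₁ S1 = q₂ S1) by (unfold q1, q2, Delta; subst; ring).
  assert (eF : F = F_of S1) by (unfold F_of; rewrite <- hF; field; lra).
  assert (eE : E = E_of S1) by (unfold E_of; rewrite <- hE; field; lra).
  assert (Fpos : 0 < F) by (rewrite eF; apply Rdiv_lt_0_compat; lra).
  (* E = 0 would force S1 = 0 through the complex equation, but then E = Eb > 0. *)
  assert (Epos : 0 < E).
  { destruct (Rle_lt_or_eq_dec 0 E pE) as [Epos | <-]; [exact Epos |].
    assert (S1 = 0) by (rewrite Rmult_0_r in eS0; nra). subst. lra. }
  assert (q2S1 : 0 < q₂ S1) by (rewrite <- hE; apply Rmult_lt_0_compat; lra).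
  assert (eS0' : S0 = S0_of S1) by (unfold S0_of; rewrite <- eE, <- eF, eS0; field; lra).
  repeat split; auto.
  - apply Gamma_iff; auto.
  - rewrite phi_split by lra. rewrite eSb, eS0', eY0, eY1, eF.
    unfold S0_of, E_of, F_of. field; lra.
  - unfold Y0_of; congruence.
  - unfold Y1_of; congruence.
Qed.

Lemma BMSS_exists_unique Sb : 0 < Sb ->
  exists E S0 S1 F Y0 Y1,
    bmss Sb E S0 S1 F Y0 Y1 /\
    forall E' S0' S1' F' Y0' Y1',
      bmss Sb E' S0' S1' F' Y0' Y1' ->
      E' = E /\ S0' = S0 /\ S1' = S1 /\ F' = F /\ Y0' = Y0 /\ Y1' = Y1.
Proof.
  intros hSb. destruct (phi_surjective Sb ltac:(lra)) as [s [Gs <-]].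
  exists (E_of s), (S0_of s), s, (F_of s), (Y0_of s), (Y1_of s).
  split; [exact (BMSS_of_Gamma s Gs hSb) |].
  intros E' S0' S1' F' Y0' Y1' hB.
  destruct (BMSS_param _ _ _ _ _ _ _ hB) as (GS1 & hphi & -> & -> & -> & -> & ->).
  assert (S1' = s) as -> by exact (strictly_increasing_on_inj Γ φ _ _ phi_increasing GS1 Gs hphi).
  repeat split.
Qed.

Definition psi (y : R) : R := epsilon (inhabits 0) (fun x => Γ x /\ φ x = y).

Lemma psi_spec y : 0 <= y -> Γ (psi y) /\ φ (psi y) = y.
Proof. intros hy. unfold psi. apply epsilon_spec. exact (phi_surjective y hy). Qed.

Lemma psi_phi x : Γ x -> psi (φ x) = x.
Proof.
  intros Gx. destruct (psi_spec (φ x) (phi_nonneg x Gx)) as [G' e'].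
  exact (strictly_increasing_on_inj Γ φ _ _ phi_increasing G' Gx e').
Qed.

Lemma psi_0 : psi 0 = 0.
Proof. rewrite <- phi_0 at 1. exact (psi_phi 0 Gamma_0). Qed.

Lemma psi_increasing y z : 0 <= y -> 0 <= z -> y < z -> psi y < psi z.
Proof. apply (inverse_increasing Γ φ psi phi_increasing psi_spec). Qed.

Lemma psi_continuous : continuous_on nonneg_set psi.
Proof.
  exact (continuous_on_inverse Γ φ psi phi_increasing psi_spec
           Gamma_nonneg Gamma_down Gamma_right).
Qed.

Lemma BMSS_S1_eq_psi Sb E S0 S1 F Y0 Y1 : bmss Sb E S0 S1 F Y0 Y1 -> S1 = psi Sb.
Proof.
  intros hB. destruct (BMSS_param _ _ _ _ _ _ _ hB) as (GS1 & <- & _).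
  symmetry. exact (psi_phi S1 GS1).
Qed.

End Cascade.

Theorem mainTheorem3 (a0 b0 c0 a1 b1 c1 : R)
  (ha0 : 0 < a0) (hb0 : 0 < b0) (hc0 : 0 < c0)
  (ha1 : 0 < a1) (hb1 : 0 < b1) (hc1 : 0 < c1)
  (Eb Fb : R) (hEb : 0 < Eb) (hFb : 0 < Fb) :
  (forall Sb, 0 < Sb ->
     exists E S0 S1 F Y0 Y1,
       BMSS a0 b0 c0 a1 b1 c1 Eb Fb Sb E S0 S1 F Y0 Y1 /\
       forall E' S0' S1' F' Y0' Y1',
         BMSS a0 b0 c0 a1 b1 c1 Eb Fb Sb E' S0' S1' F' Y0' Y1' ->
         E' = E /\ S0' = S0 /\ S1' = S1 /\ F' = F /\ Y0' = Y0 /\ Y1' = Y1) /\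
  continuous_on (Gamma a0 b0 c0 a1 b1 c1 Eb Fb) (phi a0 b0 c0 a1 b1 c1 Eb Fb) /\
  (forall x y, Gamma a0 b0 c0 a1 b1 c1 Eb Fb x -> Gamma a0 b0 c0 a1 b1 c1 Eb Fb y ->
     x < y -> phi a0 b0 c0 a1 b1 c1 Eb Fb x < phi a0 b0 c0 a1 b1 c1 Eb Fb y) /\
  (forall x, Gamma a0 b0 c0 a1 b1 c1 Eb Fb x -> 0 <= phi a0 b0 c0 a1 b1 c1 Eb Fb x) /\
  (forall y, 0 <= y -> exists x, Gamma a0 b0 c0 a1 b1 c1 Eb Fb x /\
     phi a0 b0 c0 a1 b1 c1 Eb Fb x = y) /\
  exists psi : R -> R,
    (forall y, 0 <= y -> Gamma a0 b0 c0 a1 b1 c1 Eb Fb (psi y) /\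
       phi a0 b0 c0 a1 b1 c1 Eb Fb (psi y) = y) /\
    (forall x, Gamma a0 b0 c0 a1 b1 c1 Eb Fb x -> psi (phi a0 b0 c0 a1 b1 c1 Eb Fb x) = x) /\
    continuous_on nonneg_set psi /\
    (forall y z, 0 <= y -> 0 <= z -> y < z -> psi y < psi z) /\
    psi 0 = 0 /\
    (forall Sb, 0 < Sb -> forall E S0 S1 F Y0 Y1,
       BMSS a0 b0 c0 a1 b1 c1 Eb Fb Sb E S0 S1 F Y0 Y1 -> S1 = psi Sb).
Proof.
  split; [intros Sb; apply BMSS_exists_unique; auto |].
  split; [apply phi_continuous; auto |].
  split; [intros x y; apply phi_increasing; auto |].
  split; [intros x; apply phi_nonneg; auto |].
  split; [intros y; apply phi_surjective; auto |].
  exists (psi a0 b0 c0 a1 b1 c1 Eb Fb).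
  split; [intros y; apply psi_spec; auto |].
  split; [intros x; apply psi_phi; auto |].
  split; [apply psi_continuous; auto |].
  split; [intros y z; apply psi_increasing; auto |].
  split; [apply psi_0; auto |].
  intros Sb _; apply BMSS_S1_eq_psi; auto.
Qed.
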